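(* Let $f_{SN_2}(x)=\sqrt{\frac{x^2+1}{2}}-\left(\frac{\sqrt x+1}{2}\right)\sqrt{\frac{x+1}{2}}$ for $x\in(0,\infty)$, let $f_{SN_2}^*(u)=u\,f_{SN_2}\!\left(\frac{1-u}{u}\right)$ for $u\in(0,1)$, extended by continuity to $[0,1]$ (explicitly $f_{SN_2}^*(u)=\frac{\sqrt2}{4}\left(2\sqrt{u^2+(1-u)^2}-\sqrt u-\sqrt{1-u}\right)$), and define $\overline M_{SN_2}(C_1,C_2)=E_X\{f_{SN_2}^*(P(C_2\mid x))\}$. Then $$P_e\le \frac12\left[1-\frac{4}{\sqrt2}\,\overline M_{SN_2}(C_1,C_2)\right].$$
   Context: Two-class decision problem: classes $C_1,C_2$, an observation $x$ in a space $\mathrm X$ with density $p(x)$, and a posteriori probabilities $P(C_1\mid x),P(C_2\mid x)\ge0$ with $P(C_1\mid x)+P(C_2\mid x)=1$. $E_X\{g(x)\}=\int_{\mathrm X} g(x)p(x)\,dx$. $P_e=E_X\{\min(P(C_1\mid x),P(C_2\mid x))\}$ is the Bayesian probability of error. *)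

From mathcomp Require Import all_boot all_order all_algebra.
From mathcomp Require Import all_classical all_reals all_analysis.
Set Implicit Arguments. Unset Strict Implicit. Unset Printing Implicit Defensive.
Import Order.TTheory GRing.Theory Num.Theory.
Local Open Scope ring_scope.

Definition fSN2 {R : realType} (x : R) : R :=
  Num.sqrt ((x ^+ 2 + 1) / 2) - ((Num.sqrt x + 1) / 2) * Num.sqrt ((x + 1) / 2).

(* f*_{SN_2}(u) = u f_{SN_2}((1-u)/u) on (0,1), extended by continuity to [0,1];
   at the endpoints we use the paper's explicit closed form (= the limits). *)
Definition fSN2star {R : realType} (u : R) : R :=
  if (0 < u) && (u < 1) then u * fSN2 ((1 - u) / u)
  else Num.sqrt 2 / 4 *
       (2 * Num.sqrt (u ^+ 2 + (1 - u) ^+ 2) - Num.sqrt u - Num.sqrt (1 - u)).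

Definition EX {d} {T : measurableType d} {R : realType}
  (mu : {measure set T -> \bar R}) (p : T -> R) (g : T -> R) : \bar R :=
  (\int[mu]_x (g x * p x)%:E)%E.

From mathcomp Require Import all_boot all_order all_algebra.
From mathcomp Require Import all_classical all_reals all_analysis measurable_realfun.
From mathcomp Require Import ring lra.
Set Implicit Arguments. Unset Strict Implicit. Unset Printing Implicit Defensive.
Import Order.TTheory GRing.Theory Num.Theory.
Local Open Scope ring_scope.

(* Writing f*_{SN_2} = (sqrt 2 / 4) hSN2 with hSN2 the bracket of the closed
   form, the bound is the pointwise inequality min(u, 1 - u) <= (1 - hSN2 u) / 2,
   integrated against p.  By the symmetry u <-> 1 - u it suffices to take
   u <= 1/2, where it reads hSN2 u <= 1 - 2u; with a = sqrt u, b = sqrt (1 - u)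
   this is a polynomial inequality in (a + b, b - a) on the circle a^2 + b^2 = 1. *)

Lemma sum_pow4_le_circle (R : realFieldType) (a b : R) :
  0 <= a -> a <= b -> a ^+ 2 + b ^+ 2 = 1 ->
  4 * (a ^+ 4 + b ^+ 4) <= ((a + b) * (1 + b - a)) ^+ 2.
Proof.
move=> a_ge0 le_ab circle.
set c := b - a; set s := a + b.
have c_ge0 : 0 <= c by rewrite subr_ge0.
have sc2 : s ^+ 2 + c ^+ 2 = 2 by rewrite /s /c; nra.
have ab_ge0 : 0 <= a * b by nra.
have c_le1 : c <= 1 by rewrite /c; nra.
have pow4E : a ^+ 4 + b ^+ 4 = ((a ^+ 2 + b ^+ 2) ^+ 2 + s ^+ 2 * c ^+ 2) / 2.
  by rewrite /s /c; field.
rewrite pow4E circle expr1n exprMn (_ : 1 + b - a = 1 + c); last by rewrite /c; ring.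
have -> : s ^+ 2 = 2 - c ^+ 2 by lra.
(* the difference of the two sides is c (1 - c) (4 + c - c^2) *)
have : 0 <= c * (1 - c) * (4 + c - c ^+ 2) by apply: mulr_ge0; nra.
nra.
Qed.

Definition hSN2 (R : rcfType) (u : R) : R :=
  2 * Num.sqrt (u ^+ 2 + (1 - u) ^+ 2) - Num.sqrt u - Num.sqrt (1 - u).

Lemma hSN2C (R : rcfType) (u : R) : hSN2 (1 - u) = hSN2 u.
Proof. by rewrite /hSN2 subKr [(1 - u) ^+ 2 + _]addrC; ring. Qed.

Lemma hSN2_le (R : rcfType) (u : R) :
  0 <= u -> u <= 1 - u -> hSN2 u <= 1 - 2 * u.
Proof.
move=> u_ge0 le_u; rewrite /hSN2.
set a := Num.sqrt u; set b := Num.sqrt (1 - u).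
have a2 : a ^+ 2 = u by rewrite sqr_sqrtr.
have b2 : b ^+ 2 = 1 - u by rewrite sqr_sqrtr //; lra.
have a_ge0 : 0 <= a := sqrtr_ge0 u.
have le_ab : a <= b by exact: ler_wsqrtr.
have := sum_pow4_le_circle a_ge0 le_ab ltac:(rewrite a2 b2; ring).
set X := (a + b) * (1 + b - a).
have XE : X = a + b + 1 - 2 * u.
  by transitivity (a + b + b ^+ 2 - a ^+ 2); [rewrite /X; ring | rewrite a2 b2; ring].
have pow4E : u ^+ 2 + (1 - u) ^+ 2 = a ^+ 4 + b ^+ 4.
  by rewrite -[in LHS]b2 -[in LHS]a2 -!exprM.
move=> le4; suff : Num.sqrt (u ^+ 2 + (1 - u) ^+ 2) <= X / 2 by lra.
have X_ge0 : 0 <= X by rewrite /X; apply: mulr_ge0; lra.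
rewrite pow4E -(ger0_norm (_ : 0 <= X / 2)); last lra.
rewrite -sqrtr_sqr ler_wsqrtr // expr_div_n; lra.
Qed.

Lemma minr_le_hSN2 (R : rcfType) (u : R) :
  0 <= u <= 1 -> Num.min (1 - u) u <= (1 - hSN2 u) / 2.
Proof.
move=> /andP[u_ge0 u_le1].
rewrite ge_min; apply/orP; have [le_u | le_1u] := leP u (1 - u).
  by right; have := hSN2_le u_ge0 le_u; lra.
by left; rewrite -hSN2C; have := @hSN2_le _ (1 - u) ltac:(lra) ltac:(lra); lra.
Qed.

Lemma hSN2_bounded (R : rcfType) (u : R) : 0 <= u <= 1 -> `|hSN2 u| <= 2.
Proof.
move=> /andP[u_ge0 u_le1].
have sqrt_01 (t : R) : 0 <= t <= 1 -> 0 <= Num.sqrt t <= 1.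
  by move=> /andP[_ t_le1]; rewrite sqrtr_ge0 -sqrtr1 ler_wsqrtr.
have := sqrt_01 (u ^+ 2 + (1 - u) ^+ 2) ltac:(apply/andP; split; nra).
have := sqrt_01 u ltac:(apply/andP; split; lra).
have := sqrt_01 (1 - u) ltac:(apply/andP; split; lra).
move=> /andP[? ?] /andP[? ?] /andP[? ?].
rewrite /hSN2 ler_norml; apply/andP; split; lra.
Qed.

Lemma measurable_hSN2 (R : realType) : measurable_fun setT (@hSN2 R).
Proof.
have msqrt := continuous_measurable_fun (@sqrt_continuous R).
have m1B : measurable_fun setT (fun u : R => 1 - u).
  by apply: measurable_funB => //; exact: measurable_cst.
apply: measurable_funB; first apply: measurable_funB.
- apply: measurable_funM; first exact: measurable_cst.
  apply: measurableT_comp msqrt _.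
  by apply: measurable_funD; apply: measurable_funX.
- exact: msqrt.
- exact: measurableT_comp msqrt m1B.
Qed.

Lemma fSN2starE (R : realType) (u : R) :
  0 <= u <= 1 -> fSN2star u = Num.sqrt 2 / 4 * hSN2 u.
Proof.
move=> /andP[u_ge0 u_le1]; rewrite /fSN2star /hSN2.
case: ifP => // /andP[u_gt0 u_lt1]; rewrite /fSN2.
set v := 1 - u; have v_ge0 : 0 <= v by rewrite /v; lra.
set r := Num.sqrt u; set q := Num.sqrt v; set s := Num.sqrt (2 : R).
have r_neq0 : r != 0 by rewrite gt_eqF // sqrtr_gt0.
have s_neq0 : s != 0 by rewrite gt_eqF // sqrtr_gt0.
have uE : u = r ^+ 2 by rewrite sqr_sqrtr //; lra.
have s2 : s ^+ 2 = 2 by rewrite sqr_sqrtr.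
have uV_ge0 : 0 <= u^-1 by rewrite invr_ge0.
have sV : s^-1 = s / 2 by rewrite -[in RHS]s2; field.
have sqrt1 : Num.sqrt (((v / u) ^+ 2 + 1) / 2)
    = Num.sqrt (u ^+ 2 + v ^+ 2) * s^-1 * u^-1.
  rewrite (_ : _ / 2 = (u ^+ 2 + v ^+ 2) * 2^-1 * u^-1 ^+ 2); last by field; lra.
  have w_ge0 : 0 <= u ^+ 2 + v ^+ 2 by rewrite addr_ge0 ?sqr_ge0.
  rewrite sqrtrM ?divr_ge0 // sqrtr_sqr ger0_norm //.
  by rewrite sqrtrM ?sqrtrV.
have sqrt2 : Num.sqrt (v / u) = q * r^-1 by rewrite sqrtrM ?sqrtrV.
have sqrt3 : Num.sqrt ((v / u + 1) / 2) = s^-1 * r^-1.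
  rewrite (_ : _ / 2 = 2^-1 * u^-1); last by rewrite /v; field; lra.
  by rewrite sqrtrM ?sqrtrV.
by rewrite sqrt1 sqrt2 sqrt3 sV !uE; field.
Qed.

Local Open Scope classical_set_scope.

Section expectation.
Variables (d : measure_display) (T : measurableType d) (R : realType).
Variables (mu : {measure set T -> \bar R}) (p : T -> R).
Hypotheses (p_meas : measurable_fun setT p) (p_ge0 : forall x, 0 <= p x).
Hypothesis p_int : (\int[mu]_x (p x)%:E = 1)%E.

Lemma integrable_density : mu.-integrable setT (EFin \o p).
Proof.
apply/integrableP; split; first exact/measurable_EFinP.
under eq_integral => x _ do rewrite /= ger0_norm //.
by rewrite p_int ltry.
Qed.

Lemma integrable_bounded_density (h : T -> R) (B : R) :
  measurable_fun setT h -> (forall x, `|h x| <= B) ->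
  mu.-integrable setT (fun x => (h x * p x)%:E).
Proof.
move=> h_meas h_bnd.
have -> : (fun x => (h x * p x)%:E) = ((EFin \o h) \* (EFin \o p))%E.
  by apply/funext => x; rewrite /= EFinM.
apply: integrableMr h_meas _ integrable_density => //.
exists B; split; first by rewrite num_real.
by move=> M BM x _; apply: le_trans (h_bnd x) (ltW BM).
Qed.

Variables (h : T -> R) (B : R).
Hypotheses (h_meas : measurable_fun setT h) (h_bnd : forall x, `|h x| <= B).

Lemma EX_bounded_fin_num : EX mu p h \is a fin_num.
Proof. exact: integrable_fin_num (integrable_bounded_density h_meas h_bnd). Qed.

Let hp_int : mu.-integrable setT (fun x => (h x * p x)%:E).
Proof. exact: integrable_bounded_density h_meas h_bnd. Qed.

Let affineE (a b : R) :
  (fun x => ((a + b * h x) * p x)%:E)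
  = ((fun x => a%:E * (p x)%:E) \+ (fun x => b%:E * (h x * p x)%:E))%E.
Proof. by apply/funext => x; rewrite /= mulrDl -mulrA EFinD !EFinM. Qed.

Lemma integrable_affine (a b : R) :
  mu.-integrable setT (fun x => ((a + b * h x) * p x)%:E).
Proof.
rewrite affineE; apply: integrableD => //.
- exact (integrableZl measurableT a integrable_density).
- exact (integrableZl measurableT b hp_int).
Qed.

Lemma EX_affine (a b e : R) : EX mu p h = e%:E ->
  EX mu p (fun x => a + b * h x) = (a + b * e)%:E.
Proof.
rewrite /EX => hE; rewrite affineE integralD //; last 2 first.
- exact (integrableZl measurableT a integrable_density).
- exact (integrableZl measurableT b hp_int).
rewrite (integralZl _ integrable_density) // (integralZl _ hp_int) //.
by rewrite p_int hE mule1.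
Qed.

Lemma le_EX_affine (g : T -> R) (C a b e : R) :
  measurable_fun setT g -> (forall x, `|g x| <= C) -> EX mu p h = e%:E ->
  (forall x, g x <= a + b * h x) -> (EX mu p g <= (a + b * e)%:E)%E.
Proof.
move=> g_meas g_bnd hE le_gh; rewrite -(EX_affine a b hE).
apply: le_integral => //; first exact: integrable_bounded_density g_meas g_bnd.
- exact: integrable_affine.
- by move=> x _; rewrite lee_fin ler_wpM2r.
Qed.

End expectation.

Theorem mainTheorem2 (d : measure_display) (T : measurableType d) (R : realType)
  (mu : {measure set T -> \bar R}) (p : T -> R)
  (p_meas : measurable_fun setT p) (p_ge0 : forall x, 0 <= p x)
  (p_int : (\int[mu]_x (p x)%:E = 1)%E)
  (P1 P2 : T -> R)
  (P1_meas : measurable_fun setT P1) (P2_meas : measurable_fun setT P2)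
  (P1_ge0 : forall x, 0 <= P1 x) (P2_ge0 : forall x, 0 <= P2 x)
  (P12 : forall x, P1 x + P2 x = 1) :
  (EX mu p (fun x => Num.min (P1 x) (P2 x))
   <= (1 / 2)%:E * (1%:E - (4 / Num.sqrt 2)%:E * EX mu p (fun x => fSN2star (P2 x))))%E.
Proof.
have P2_01 x : 0 <= P2 x <= 1 by have := P12 x; have := P1_ge0 x; rewrite P2_ge0 /=; lra.
have P1E x : P1 x = 1 - P2 x by have := P12 x; lra.
have fstarE x := fSN2starE (P2_01 x).
have s_gt0 : 0 < Num.sqrt (2 : R) by rewrite sqrtr_gt0.
have f_meas : measurable_fun setT (fun x => fSN2star (P2 x)).
  rewrite (funext fstarE); apply: measurable_funM; first exact: measurable_cst.
  exact: measurableT_comp (@measurable_hSN2 R) P2_meas.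
have f_bnd x : `|fSN2star (P2 x)| <= Num.sqrt 2 / 2.
  rewrite fstarE normrM ger0_norm ?divr_ge0 ?sqrtr_ge0 //.
  apply: le_trans (ler_wpM2l _ (hSN2_bounded (P2_01 x))) _; last lra.
  by rewrite divr_ge0 ?sqrtr_ge0.
have min_bnd x : `|Num.min (P1 x) (P2 x)| <= 1.
  by rewrite ger0_norm ?comparable_le_min ?P1_ge0 ?P2_ge0 // ge_min P1E; lra.
have [e fE] : exists e, EX mu p (fun x => fSN2star (P2 x)) = e%:E.
  by exists (fine (EX mu p (fun x => fSN2star (P2 x))));
     rewrite fineK // (EX_bounded_fin_num p_meas p_ge0 p_int f_meas f_bnd).
rewrite fE -EFinM.
rewrite (_ : 1 / 2 * _ = 1 / 2 + (- 2 / Num.sqrt 2) * e); last first.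
  by field; exact: lt0r_neq0.
apply: (le_EX_affine p_meas p_ge0 p_int f_meas f_bnd
  (measurable_minr P1_meas P2_meas) min_bnd fE) => x.
rewrite /= P1E fstarE.
have -> : 1 / 2 + -2 / Num.sqrt 2 * (Num.sqrt 2 / 4 * hSN2 (P2 x)) = (1 - hSN2 (P2 x)) / 2.
  by field; exact: lt0r_neq0.
exact: minr_le_hSN2.
Qed.
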